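(* Let $p$ be a prime and $G$ a finite Abelian $p$-group. Then $R_{\mathbb Q}(G\times C_p)=R(G,C_p)\oplus\mathbb Z\cdot 1_{G\times C_p}$ (internal direct sum of Abelian groups), where $1_{G\times C_p}$ is the class of the trivial representation $\mathbb Q$.
   Context: $R_{\mathbb Q}(\Gamma)$ is the rational representation ring of a finite group $\Gamma$. $R(G,C_p)\subseteq R_{\mathbb Q}(G\times C_p)$ is the subgroup generated by the isomorphism classes of finitely generated $\mathbb Q[G\times C_p]$-modules whose restriction to the subgroup $1\times C_p$ is a free $\mathbb Q[C_p]$-module. *)

From HB Require Import structures.
From mathcomp Require Import all_boot all_order all_algebra.
From mathcomp Require Import all_fingroup all_solvable all_field all_character.
Set Implicit Arguments. Unset Strict Implicit. Unset Printing Implicit Defensive.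
Import GRing.Theory Num.Theory.
Local Open Scope ring_scope.

Lemma triv_mx_repr (F : fieldType) (gT : finGroupType) (H : {group gT}) (m : nat) :
  mx_repr H (fun _ : gT => (1%:M : 'M[F]_m)).
Proof. by split=> // x y _ _; rewrite mulmx1. Qed.
Definition triv_repr (F : fieldType) (gT : finGroupType) (H : {group gT}) (m : nat) :=
  MxRepresentation (@triv_mx_repr F gT H m).

(* m copies (direct sum) of a representation: tensor with the trivial rep. of dim m;
   the representation of a free F[H]-module of rank m is  mcopies m (regular_repr F H). *)
Definition mcopies (F : fieldType) (gT : finGroupType) (H : {group gT}) (m n : nat)
  (rH : mx_representation F H n) : mx_representation F H (m * n) :=
  prod_repr (triv_repr F H m) rH.

(* A rational representation (finitely generated Q[K]-module) of K. *)
Definition qrep (gT : finGroupType) (K : {group gT}) := {n : nat & mx_representation rat K n}.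

(* The class of a Q[K]-module in R_Q(K), represented by its character
   (computed in algC after extending scalars Q -> algC). *)
Definition qclass (gT : finGroupType) (K : {group gT}) (M : qrep K) : 'CF(K) :=
  cfRepr (map_repr (GRing.RMorphism.clone _ _ (@ratr algC) _) (projT2 M)).

Definition gen_subgroup (gT : finGroupType) (K : {group gT}) (P : qrep K -> Prop)
  (phi : 'CF(K)) : Prop :=
  exists s : seq (int * qrep K),
    foldr (fun z Q => P z.2 /\ Q) True s /\ phi = \sum_(z <- s) qclass z.2 *~ z.1.

Definition RQ (gT : finGroupType) (K : {group gT}) : 'CF(K) -> Prop :=
  gen_subgroup (fun _ => True).

Definition free_on (gT : finGroupType) (K C : {group gT}) (sCK : C \subset K)
  (M : qrep K) : Prop :=
  exists m : nat, mx_rsim (subg_repr (projT2 M) sCK) (mcopies m (regular_repr rat C)).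

Definition Rfree (gT : finGroupType) (K C : {group gT}) (sCK : C \subset K) :
  'CF(K) -> Prop := gen_subgroup (free_on sCK).

Definition one_class (gT : finGroupType) (K : {group gT}) : 'CF(K) :=
  qclass (existT _ 1%N (triv_repr rat K 1) : qrep K).

(* Evaluation at an element c <> 1 of C separates the two summands: classes
   of modules that are free over Q[C] vanish at c, while the trivial class is
   1 there.  Conversely, let M be a Q[G x C]-module of dimension n.  Galois
   conjugation permutes the elements of C \ 1, so the character of M takes a
   constant integer value t on C \ 1, and computing the multiplicity of the
   trivial character of C gives n - t = p a with a >= 0.  If I is Q[C]
   inflated to G x C and Aug its augmentation submodule, then the character of
   M + Q^(p a) + n Aug vanishes on C \ 1, so this module, like I, is free over
   Q[C], and [M] = [M + Q^(p a) + n Aug] - n [I] + t [Q].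
   Freeness is read off characters because rational representations with the
   same character are similar over Q: over the algebraic numbers the
   intertwiners form the extension of scalars of the rational ones, and a
   polynomial determinant that is nonzero somewhere is nonzero at a rational
   point. *)

From HB Require Import structures.
From mathcomp Require Import all_boot all_order all_algebra.
From mathcomp Require Import all_fingroup all_solvable all_field all_character.
From mathcomp Require Import ring.
Import Order.TTheory GRing.Theory Num.Theory.
Local Open Scope ring_scope.
Set Implicit Arguments. Unset Strict Implicit. Unset Printing Implicit Defensive.

Local Notation ratC := (ratr : {rmorphism rat -> algC}).

Lemma det_pencil_nat (R : numDomainType) n (M0 M1 : 'M[R]_n) (l : R) :
  \det (M0 + l *: M1) != 0 -> exists i : nat, \det (M0 + i%:R *: M1) != 0.
Proof.
move=> detl.
pose P : {poly R} := \det (map_mx polyC M0 + 'X *: map_mx polyC M1).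
have PE z : P.[z] = \det (M0 + z *: M1).
  rewrite /P -horner_evalE -det_map_mx; congr (\det _); apply/matrixP=> i j.
  by rewrite !mxE /= horner_evalE !hornerE.
have P_neq0 : P != 0 by apply: contraNneq detl => P0; rewrite -PE P0 horner0.
pose rs := [seq (i%:R : R) | i <- iota 0 (size P)].
have uniq_rs : uniq rs.
  by rewrite map_inj_uniq ?iota_uniq // => i j /eqP; rewrite eqr_nat => /eqP.
have : ~~ all (root P) rs.
  apply/negP => /(max_poly_roots P_neq0)/(_ uniq_rs).
  by rewrite size_map size_iota ltnn.
by case/allPn => _ /mapP[i _ ->]; rewrite /root PE; exists i.
Qed.

Lemma det_lincomb_descent (F : fieldType) (E : numDomainType) (f : {rmorphism F -> E})
    n k (N0 : 'M[F]_n) (A : 'I_k -> 'M[F]_n) (lam : 'I_k -> E) :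
  \det (map_mx f N0 + \sum_i lam i *: map_mx f (A i)) != 0 ->
  exists mu : 'I_k -> F, \det (N0 + \sum_i mu i *: A i) != 0.
Proof.
elim: k N0 A lam => [|k IHk] N0 A lam.
  rewrite big_ord0 addr0 det_map_mx fmorph_eq0 => detN0.
  by exists (fun _ => 0); rewrite big_ord0 addr0.
rewrite big_ord_recl addrA addrAC => /det_pencil_nat[i].
have /= := IHk (N0 + i%:R *: A ord0) (A \o lift ord0) (lam \o lift ord0).
rewrite map_mxD map_mxZ rmorph_nat addrAC => /[apply][[mu detmu]].
exists (fun j => if unlift ord0 j is Some j' then mu j' else i%:R).
rewrite big_ord_recl unlift_none addrA.
by under eq_bigr => j _ do rewrite liftK.
Qed.

Lemma rat_rsim_of_algC (gT : finGroupType) (H : {group gT}) n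
    (rA rB : mx_representation rat H n) (B : 'M[algC]_n) :
  B \in unitmx ->
  {in H, forall x, map_mx ratr (rA x) *m B = B *m map_mx ratr (rB x)} ->
  mx_rsim rA rB.
Proof.
move=> uB homB.
pose D := dadd_grepr (Representation rA) (Representation rB).
pose Cm := cent_mx (enveloping_algebra_mx D).
pose Y (i : 'I_((n + n) ^ 2)%N) : 'M[rat]_n := ursubmx (vec_mx (row i Cm) : 'M_(n + n)).
pose X : 'M[algC]_(n + n) := block_mx 0 B 0 0.
have /submxP[v Dv] : (mxvec X <= map_mx ratr Cm)%MS.
  rewrite map_cent_mx map_enveloping_algebra_mx; apply/cent_rowP => i.
  rewrite rowK mxvecK /= /map_repr_mx map_block_mx !map_mx0 /X !mulmx_block.
  by rewrite !(mulmx0, mul0mx, addr0, add0r) homB // enum_valP.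
have : \det (map_mx ratr 0 + \sum_i v 0 i *: map_mx ratr (Y i)) != 0.
  rewrite map_mx0 add0r -unitfE -unitmxE.
  suff -> : \sum_i v 0 i *: map_mx ratr (Y i) = ursubmx X by rewrite block_mxKur.
  rewrite -[X]mxvecK Dv mulmx_sum_row /Y /ursubmx !linear_sum.
  apply: eq_bigr => i _.
  by rewrite !linearZ /= map_rsubmx map_usubmx map_vec_mx map_row.
case/det_lincomb_descent => mu; rewrite add0r => detmu.
pose Z : 'M[rat]_(n + n) := vec_mx (\row_i mu i *m Cm).
have cZ : (Z \in Cm)%MS by rewrite vec_mxK submxMl.
have ZE : ursubmx Z = \sum_i mu i *: Y i.
  rewrite /Z /Y /ursubmx mulmx_sum_row !linear_sum; apply: eq_bigr => i _.
  by rewrite !linearZ mxE.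
exists (ursubmx Z) => //; first by rewrite row_free_unit unitmxE unitfE ZE.
move=> x Hx; have := cent_mxP cZ (D x) (envelop_mx_id D Hx).
rewrite -[Z]submxK /= !mulmx_block !(mulmx0, mul0mx, addr0, add0r).
by move/(congr1 ursubmx); rewrite !block_mxKur.
Qed.

Lemma rat_rsim_mxtrace (gT : finGroupType) (H : {group gT}) n1 n2
    (rA : mx_representation rat H n1) (rB : mx_representation rat H n2) :
  {in H, forall x, \tr (rA x) = \tr (rB x)} -> mx_rsim rA rB.
Proof.
move=> trAB.
have : cfRepr (map_repr ratr rA) == cfRepr (map_repr ratr rB).
  by apply/eqP/cfun_inP => x Hx; rewrite !cfunE Hx /= !trace_map_mx trAB.
case/cfRepr_rsimP => B n12; move: rA trAB B; rewrite n12 => rA _ B fB homB.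
by apply: (rat_rsim_of_algC (B := B)); rewrite -?row_free_unit.
Qed.

Lemma conjmx_unit_expr (R : comUnitRingType) n (B A : 'M[R]_n) k :
  B \in unitmx -> (invmx B *m A *m B) ^+ k = invmx B *m A ^+ k *m B.
Proof.
move=> uB; elim: k => [|k IHk]; first by rewrite !expr0 mulmx1 mulVmx.
rewrite exprS IHk -!mulmxE !mulmxA -(mulmxA _ B) mulmxV // mulmx1.
by rewrite -(mulmxA _ A) mulmxE -exprS.
Qed.

Lemma diag_mx_expr (R : comPzRingType) n (e : 'rV[R]_n) k :
  diag_mx e ^+ k = diag_mx (\row_i e 0 i ^+ k).
Proof.
elim: k => [|k IHk].
  rewrite expr0 (_ : \row_i _ = const_mx 1) ?diag_const_mx //.
  by apply/rowP => i; rewrite !mxE.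
rewrite exprS IHk -mulmxE mulmx_diag; congr diag_mx.
by apply/rowP => i; rewrite !mxE exprS.
Qed.

Lemma rat_mxtrace_expg_coprime (gT : finGroupType) (H : {group gT}) n
    (rH : mx_representation rat H n) x k :
  x \in H -> coprime k #[x]%g -> \tr (rH (x ^+ k)%g) = \tr (rH x).
Proof.
case: n rH => [|n] rH Hx co_k; first by rewrite !flatmx0.
have [u uE] := Qn_aut_exists co_k.
pose rC := map_repr ratC rH.
have [e [[B uB rCx] [e_unity _] _ _]] := repr_rsim_diag rC Hx.
have trC y : ratC (\tr (rH y)) = \tr (rC y).
  by rewrite /= trace_map_mx.
apply: (fmorph_inj ratC).
rewrite -[RHS](fmorph_rat u) 2!trC (repr_mxX rC) // rCx.
rewrite conjmx_unit_expr // diag_mx_expr.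
rewrite mxtrace_mulC mulmxA mulmxV // mul1mx.
rewrite [in RHS]mxtrace_mulC mulmxA mulmxV // mul1mx !mxtrace_diag rmorph_sum.
by apply: eq_bigr => i _; rewrite mxE uE.
Qed.

Section Inflation.
Variables (gT : finGroupType) (G C K : {group gT}).
Hypothesis dGC : (G \x C)%g = K.

Lemma remgr_dprod_mem x : x \in K -> remgr G C x \in C.
Proof. by have [_ defK _ _] := dprodP dGC; rewrite -defK; apply: mem_remgr. Qed.

Lemma remgr_dprod_id c : c \in C -> remgr G C c = c.
Proof. by have [_ _ _ tiGC] := dprodP dGC; apply: remgr_id. Qed.

Lemma remgr_dprodM : {in K &, {morph remgr G C : x y / (x * y)%g}}.
Proof.
have [[nsGK _] [_ defK _ tiGC]] := (dprod_normal2 dGC, dprodP dGC).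
by apply: remgrM nsGK; apply/complP.
Qed.

Variables (F : fieldType) (n : nat) (rC : mx_representation F C n).

Lemma infl_mx_repr : mx_repr K (fun x => rC (remgr G C x)).
Proof.
split=> [|x y Kx Ky]; first by rewrite remgr_dprod_id // repr_mx1.
by rewrite remgr_dprodM // repr_mxM // remgr_dprod_mem.
Qed.

Definition infl_repr := MxRepresentation infl_mx_repr.

Lemma mxtrace_infl c : c \in C -> \tr (infl_repr c) = \tr (rC c).
Proof. by move=> Cc; rewrite /= remgr_dprod_id. Qed.

End Inflation.

Section Augmentation.
Variables (gT : finGroupType) (G C K : {group gT}).
Hypothesis dGC : (G \x C)%g = K.

Let ones : 'cV[rat]_#|C| := const_mx 1.

Lemma regular_mx_ones y : regular_repr rat C y *m ones = ones.
Proof.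
apply/row_matrixP => i; rewrite row_mul rowK -rowE.
by apply/rowP => j; rewrite !mxE.
Qed.

Let infl_reg := infl_repr dGC (regular_repr rat C).

Lemma aug_mxmodule : mxmodule infl_reg (kermx ones).
Proof.
apply/mxmoduleP => x Kx.
by rewrite sub_kermx /= -mulmxA regular_mx_ones mulmx_ker.
Qed.

Definition aug_repr := submod_repr aug_mxmodule.

Lemma mxtrace_aug x : x \in K -> \tr (aug_repr x) = \tr (infl_reg x) - 1.
Proof.
move=> Kx; rewrite -(mxtrace_sub_fact_mod aug_mxmodule x).
have -> : factmod_repr aug_mxmodule x = 1%:M.
  rewrite /= /factmod_mx -[RHS](val_factmodK (U := kermx ones)).
  apply/eqP; rewrite -subr_eq0 -linearB /= in_factmod_eq0 sub_kermx.
  by rewrite mulmxBl -mulmxA regular_mx_ones subrr.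
have rank_ones : \rank ones = 1%N.
  apply/eqP; rewrite eqn_leq rank_leq_col lt0n mxrank_eq0.
  apply/eqP => /matrixP/(_ (Ordinal (cardG_gt0 C)) 0).
  by rewrite !mxE => /eqP; rewrite oner_eq0.
have rank_coker : \rank (cokermx (kermx ones)) = 1%N.
  by rewrite mxrank_coker mxrank_ker rank_ones subKn ?cardG_gt0.
by rewrite mxtrace1 rank_coker addrK.
Qed.

End Augmentation.

Lemma cfRepr_ratE (gT : finGroupType) (H : {group gT}) n
    (rH : mx_representation rat H n) x :
  x \in H -> cfRepr (map_repr ratC rH) x = ratC (\tr (rH x)).
Proof. by move=> Hx; rewrite cfunE Hx mulr1n /= trace_map_mx. Qed.

Lemma mxtrace_regular_rat (gT : finGroupType) (H : {group gT}) x : x \in H ->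
  \tr (regular_repr rat H x) = #|H|%:R *+ (x == 1%g).
Proof.
move=> Hx; apply: (fmorph_inj ratC).
rewrite rmorphMn rmorph_nat -trace_map_mx.
have -> : map_mx ratC (regular_repr rat H x) = regular_repr algC H x.
  exact: (map_regular_repr ratC).
by move/cfunP/(_ x): (cfReprReg H); rewrite cfunE Hx mulr1n cfRegE.
Qed.

Section PrimeOrder.
Variables (gT : finGroupType) (C : {group gT}) (n : nat).
Variable rC : mx_representation rat C n.
Hypothesis prC : prime #|C|.

Lemma rat_mxtrace_prime_nt c d :
  c \in C^#%g -> d \in C^#%g -> \tr (rC d) = \tr (rC c).
Proof.
move=> C'c /setD1P[ntd Cd].
have defC := nt_gen_prime prC C'c.
have oc : #[c]%g = #|C| by rewrite orderE -defC.
have /cycleP[k Dd] : d \in <[c]>%g by rewrite -defC.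
rewrite {}Dd in ntd *.
apply: rat_mxtrace_expg_coprime; first by case/setD1P: C'c.
rewrite coprime_sym oc prime_coprime //; apply: contra ntd => /dvdnP[m ->].
by rewrite mulnC expgM -oc expg_order expg1n.
Qed.

Lemma prime_order_nt_elt : exists c, c \in C^#%g.
Proof.
have /trivgPn[c Cc ntc] : C :!=: 1%g.
  by rewrite trivg_card1; apply: contraTneq prC => ->.
by exists c; rewrite !inE ntc.
Qed.

Let chi := cfRepr (map_repr ratC rC).

Lemma rat_mxtrace_prime_nt_int :
  exists t : int, {in C^#%g, forall c, \tr (rC c) = t%:~R}.
Proof.
have [c C'c] := prime_order_nt_elt; have Cc : c \in C by case/setD1P: C'c.
have : chi c \is a Num.int.
  by rewrite Cint_rat_Aint ?Aint_char ?cfRepr_char // cfRepr_ratE // Crat_rat.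
case/intrP => t chic; exists t => d C'd; rewrite (rat_mxtrace_prime_nt C'c C'd).
by apply: (fmorph_inj ratC); rewrite rmorph_int -chic cfRepr_ratE.
Qed.

Lemma rat_mxtrace_prime_nt_congr (t : int) :
  {in C^#%g, forall c, \tr (rC c) = t%:~R} ->
  exists a : nat, n%:Z - t = (#|C| * a)%N.
Proof.
move=> trC.
have chi_nt : {in C^#%g, forall c, chi c = t%:~R}.
  move=> c C'c; have Cc : c \in C by case/setD1P: C'c.
  by rewrite cfRepr_ratE // trC // rmorph_int.
have t_le_n : t <= n%:Z.
  have [c C'c] := prime_order_nt_elt; have Cc : c \in C by case/setD1P: C'c.
  have := char1_ge_norm c (cfRepr_char (map_repr ratC rC)).
  rewrite -/chi chi_nt // cfRepr1 -intr_norm -[n%:R]/(n%:Z%:~R) ler_int.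
  exact: le_trans (ler_norm t).
have [N dotN] : exists N : nat, '[chi, 1] = N%:R.
  by apply/natrP; rewrite Cnat_cfdot_char ?cfRepr_char ?cfun1_char.
have sum_chi : \sum_(x in C) chi x = (n%:Z - t + t *+ #|C|)%:~R.
  rewrite (big_setD1 1%g) ?group1 //= cfRepr1 (eq_bigr _ chi_nt) sumr_const.
  by rewrite (cardsD1 1%g C) group1 add1n !intrD rmorphMn mulrS; ring.
have dotE : N%:Z * #|C| = n%:Z - t + t *+ #|C|.
  apply: (@intr_inj algC); rewrite -sum_chi.
  move: dotN; rewrite cfdotE (eq_bigr chi) => [|x Cx]; last first.
    by rewrite cfun1E Cx conjC1 mulr1.
  move/(congr1 ( *%R #|C|%:R)); rewrite mulVKf ?neq0CG // => ->.
  by rewrite intrM mulrC.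
have Nt_ge0 : 0 <= N%:Z - t.
  have C_gt0 : 0 < #|C|%:Z by rewrite ltz_nat cardG_gt0.
  by rewrite -(pmulr_lge0 _ C_gt0) mulrBl dotE -mulr_natr natz addrK subr_ge0.
exists `|N%:Z - t|%N; rewrite PoszM gez0_abs // mulrC mulrBl dotE.
by rewrite -mulr_natr natz addrK.
Qed.

End PrimeOrder.

Section GeneratedSubgroup.
Variables (gT : finGroupType) (K : {group gT}).
Implicit Types (P Q : qrep K -> Prop) (a b : 'CF(K)).

Lemma gen_subgroup0 P : gen_subgroup P 0.
Proof. by exists [::]; rewrite big_nil. Qed.

Lemma gen_subgroup_cons P M k a :
  P M -> gen_subgroup P a -> gen_subgroup P (qclass M *~ k + a).
Proof. by move=> PM [s [Ps ->]]; exists ((k, M) :: s); rewrite big_cons. Qed.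

Lemma gen_subgroup_ind P (R : 'CF(K) -> Prop) :
  R 0 -> (forall M k a, P M -> R a -> R (qclass M *~ k + a)) ->
  forall a, gen_subgroup P a -> R a.
Proof.
move=> R0 Rcons _ [s [Ps ->]]; elim: s Ps => [|[k M] s IHs] /=.
  by rewrite big_nil.
by case=> PM Ps; rewrite big_cons; apply: Rcons (IHs Ps).
Qed.

Lemma gen_subgroup_qclass P M : P M -> gen_subgroup P (qclass M).
Proof.
by move=> PM; have := gen_subgroup_cons 1 PM (gen_subgroup0 P); rewrite mulr1z addr0.
Qed.

Lemma gen_subgroupD P a b :
  gen_subgroup P a -> gen_subgroup P b -> gen_subgroup P (a + b).
Proof.
move=> Pa Pb; apply: (gen_subgroup_ind (R := fun a => gen_subgroup P (a + b))) Pa.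
  by rewrite add0r.
by move=> M k a' PM Pa'; rewrite -addrA; apply: gen_subgroup_cons.
Qed.

Lemma gen_subgroupMz P a k : gen_subgroup P a -> gen_subgroup P (a *~ k).
Proof.
apply: (gen_subgroup_ind (R := fun a => gen_subgroup P (a *~ k))).
  by rewrite mul0rz; apply: gen_subgroup0.
by move=> M k' a' PM Pa'; rewrite mulrzDl -mulrzA; apply: gen_subgroup_cons.
Qed.

Lemma gen_subgroupS P Q a :
  (forall M, P M -> Q M) -> gen_subgroup P a -> gen_subgroup Q a.
Proof.
move=> sPQ; apply: gen_subgroup_ind; first exact: gen_subgroup0.
by move=> M k a' PM Qa'; apply: gen_subgroup_cons (sPQ M PM) Qa'.
Qed.

End GeneratedSubgroup.

Lemma mxtrace_mcopies (F : fieldType) (gT : finGroupType) (H : {group gT}) m n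
    (rH : mx_representation F H n) x :
  \tr (mcopies m rH x) = m%:R * \tr (rH x).
Proof. by rewrite /mcopies /= mxtrace_prod mxtrace1. Qed.

Lemma cfunMz (gT : finGroupType) (H : {group gT}) (phi : 'CF(H)) k x :
  (phi *~ k) x = phi x *~ k.
Proof.
have cfunMn m : (phi *+ m) x = phi x *+ m.
  by elim: m => [|m IHm]; rewrite ?mulr0n ?cfunE // !mulrS cfunE IHm.
by case: k => m; rewrite ?NegzE ?mulrNz ?cfunE cfunMn.
Qed.

Lemma qclassE (gT : finGroupType) (K : {group gT}) (M : qrep K) x :
  x \in K -> qclass M x = ratr (\tr (projT2 M x)).
Proof. by move=> Kx; rewrite /qclass cfunE Kx mulr1n /= trace_map_mx. Qed.

Lemma one_classE (gT : finGroupType) (K : {group gT}) x :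
  x \in K -> one_class K x = 1.
Proof. by move=> Kx; rewrite qclassE //= mxtrace1 rmorph1. Qed.

Section DirectProductWithPrimeOrder.
Variables (gT : finGroupType) (G C K : {group gT}).
Hypotheses (sCK : C \subset K) (prC : prime #|C|) (dGC : (G \x C)%g = K).

Lemma free_on_mxtrace d (rK : mx_representation rat K d) m :
    {in C, forall c, \tr (rK c) = m%:R * \tr (regular_repr rat C c)} ->
  free_on sCK (existT _ d rK : qrep K).
Proof.
by move=> trK; exists m; apply: rat_rsim_mxtrace => c Cc; rewrite mxtrace_mcopies -trK.
Qed.

Lemma free_qclass_nt (M : qrep K) c : free_on sCK M -> c \in C^#%g -> qclass M c = 0.
Proof.
case=> m simM /setD1P[ntc Cc]; rewrite qclassE ?(subsetP sCK) //.
rewrite (mxtrace_rsim simM Cc) mxtrace_mcopies mxtrace_regular_rat //.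
by rewrite (negbTE ntc) mulr0n mulr0 rmorph0.
Qed.

Lemma Rfree_nt a c : Rfree sCK a -> c \in C^#%g -> a c = 0.
Proof.
move=> Fa C'c; apply: (gen_subgroup_ind (R := fun a : 'CF(K) => a c = 0)) Fa.
  by rewrite cfunE.
by move=> M k a' FM a'c; rewrite cfunE cfunMz a'c free_qclass_nt // mul0rz addr0.
Qed.

Lemma qclass_decomp (M : qrep K) :
  exists a k, Rfree sCK a /\ qclass M = a + one_class K *~ k.
Proof.
case: M => n rM /=.
have [t trC] := rat_mxtrace_prime_nt_int (subg_repr rM sCK) prC.
have [a def_a] := rat_mxtrace_prime_nt_congr prC trC.
pose rI := infl_repr dGC (regular_repr rat C).
pose rF := dadd_grepr
  (dadd_grepr (Representation rM) (Representation (triv_repr rat K (#|C| * a))))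
  (Representation (mcopies n (aug_repr dGC))).
pose qF : qrep K := existT _ _ (mx_repr_of_repr rF).
pose qI : qrep K := existT _ _ rI.
(* The ascription elaborates [rF x] with the ring instance of [rat] used by
   [qrep]; without it [trF] does not rewrite the goals below. *)
have trF x : x \in K -> \tr ((rF : mx_representation rat K _) x) =
    \tr (rM x) + (#|C| * a)%:R + n%:R * (\tr (rI x) - 1).
  by move=> Kx; rewrite /= !mxtrace_block mxtrace1 mxtrace_mcopies mxtrace_aug.
have nat_a : ((#|C| * a)%N%:R : rat) = n%:R - t%:~R.
  by rewrite -[LHS]/((#|C| * a)%N%:Z%:~R) -def_a intrB.
exists (qclass qF + qclass qI *~ - n%:Z), t.
split.
  apply: gen_subgroupD; last first.
    apply/gen_subgroupMz/gen_subgroup_qclass/(free_on_mxtrace (m := 1%N)).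
    by move=> c Cc; rewrite mul1r mxtrace_infl.
  apply/gen_subgroup_qclass/(free_on_mxtrace (m := (n + a)%N)) => c Cc.
  rewrite trF ?(subsetP sCK) // mxtrace_infl // mxtrace_regular_rat //.
  have [-> | ntc] := eqVneq c 1%g.
    by rewrite repr_mx1 mxtrace1 mulr1n natrD natrM; ring.
  rewrite mulr0n mulr0 trC ?nat_a; last by rewrite !inE ntc.
  ring.
apply/cfun_inP => x Kx; rewrite qclassE // [RHS]cfunE [X in X + _]cfunE.
rewrite !cfunMz one_classE // !qclassE //= trF //.
rewrite nat_a; change (regular_mx rat C (remgr G C x)) with (rI x).
by rewrite !(rmorphD, rmorphB, rmorphM, rmorph1, rmorph_nat, rmorph_int); ring.
Qed.

End DirectProductWithPrimeOrder.

Unset Implicit Arguments. Set Strict Implicit.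

Theorem lemma4p2 (gT : finGroupType) (p : nat) (G C K : {group gT})
  (sCK : C \subset K) :
  prime p -> abelian G -> (p.-group G)%g -> #|C| = p -> (G \x C)%g = K ->
  (forall phi : 'CF(K), RQ phi <->
     exists (a : 'CF(K)) (k : int), Rfree sCK a /\ phi = a + one_class K *~ k) /\
  (forall (a : 'CF(K)) (k : int),
     Rfree sCK a -> a + one_class K *~ k = 0 -> a = 0 /\ k = 0).
Proof.
move=> pr_p _ _ oC dGC; rewrite -oC in pr_p; split=> [phi | a k Fa].
  split=> [RQphi | [a [k [Fa ->]]]]; last first.
    apply: gen_subgroupD; first exact: gen_subgroupS Fa.
    exact/gen_subgroupMz/gen_subgroup_qclass.
  pose R phi := exists a k, Rfree sCK a /\ phi = a + one_class K *~ k.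
  apply: (gen_subgroup_ind (R := R)) RQphi => [|M k _ _ [a [l [Fa ->]]]].
    by exists 0, 0; rewrite add0r mulr0z; split; first exact: gen_subgroup0.
  have [b [j [Fb ->]]] := qclass_decomp sCK pr_p dGC M.
  exists (b *~ k + a), (j * k + l); split.
    exact/gen_subgroupD/Fa/gen_subgroupMz.
  by rewrite mulrzDl !mulrzDr mulrzA addrACA.
move=> sum0; suff k0 : k = 0 by move: sum0; rewrite k0 mulr0z addr0.
have [c C'c] := prime_order_nt_elt pr_p.
have Kc : c \in K by apply: (subsetP sCK); case/setD1P: C'c.
move/cfunP/(_ c): sum0; rewrite !cfunE cfunMz (Rfree_nt Fa C'c) one_classE //.
by rewrite add0r => /eqP; rewrite intr_eq0 => /eqP.
Qed.
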